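(* Let $X$ and $Y$ be metric spaces with $X$ complete, and let $f\colon X\to Y$ be a continuous open surjection. Then $f$ is density-surjective, i.e. there exists a subset $Z\subset X$ such that $\mathrm{dens}(Z)=\mathrm{dens}(Y)$ and $f|_Z\colon Z\to Y$ is surjective.
   Context: For a metric space $W$, $\mathrm{dens}(W)$ (the density character) denotes the smallest cardinality of a dense subset of $W$. A map $f\colon X\to Y$ between metric spaces is called density-surjective if there is a subset $Z\subset X$ with $\mathrm{dens}(Z)=\mathrm{dens}(Y)$ such that $f|_Z\colon Z\to Y$ is surjective. A map is open if it maps open sets to open sets. *)

From Stdlib Require Import Reals.
Open Scope R_scope.
Set Implicit Arguments.

Record MetricSpace := {
  carrier :> Type;
  dist : carrier -> carrier -> R;
  dist_nonneg : forall x y, 0 <= dist x y;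
  dist_eq0 : forall x y, dist x y = 0 <-> x = y;
  dist_sym : forall x y, dist x y = dist y x;
  dist_tri : forall x y z, dist x z <= dist x y + dist y z
}.

Arguments dist {m} _ _.

Definition open_set {X : MetricSpace} (U : X -> Prop) : Prop :=
  forall x, U x -> exists e, 0 < e /\ forall y, dist x y < e -> U y.

Definition cauchy_seq {X : MetricSpace} (u : nat -> X) : Prop :=
  forall e, 0 < e -> exists N, forall m n, (N <= m)%nat -> (N <= n)%nat -> dist (u m) (u n) < e.

Definition converges_to {X : MetricSpace} (u : nat -> X) (l : X) : Prop :=
  forall e, 0 < e -> exists N, forall n, (N <= n)%nat -> dist (u n) l < e.

Definition complete (X : MetricSpace) : Prop :=
  forall u : nat -> X, cauchy_seq u -> exists l, converges_to u l.

Definition continuous_map {X Y : MetricSpace} (f : X -> Y) : Prop :=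
  forall x e, 0 < e -> exists d, 0 < d /\ forall y, dist x y < d -> dist (f x) (f y) < e.

Definition image {X Y : Type} (f : X -> Y) (U : X -> Prop) : Y -> Prop :=
  fun y => exists x, U x /\ f x = y.

Definition open_map {X Y : MetricSpace} (f : X -> Y) : Prop :=
  forall U : X -> Prop, open_set U -> open_set (image f U).

Definition surjective {X Y : Type} (f : X -> Y) : Prop := forall y, exists x, f x = y.

Definition dense_in {X : MetricSpace} (W D : X -> Prop) : Prop :=
  (forall x, D x -> W x) /\
  (forall x, W x -> forall e, 0 < e -> exists d, D d /\ dist x d < e).

Definition card_le {T U : Type} (A : T -> Prop) (B : U -> Prop) : Prop :=
  exists g : sig A -> sig B, forall a1 a2, g a1 = g a2 -> a1 = a2.

(* dens(W1) <= dens(W2): every dense subset of W2 has cardinality at least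
   that of some dense subset of W1 (i.e. min over dense subsets compares). *)
Definition dens_le {X Y : MetricSpace} (W1 : X -> Prop) (W2 : Y -> Prop) : Prop :=
  forall D2, dense_in W2 D2 -> exists D1, dense_in W1 D1 /\ card_le D1 D2.

Definition dens_eq {X Y : MetricSpace} (W1 : X -> Prop) (W2 : Y -> Prop) : Prop :=
  dens_le W1 W2 /\ dens_le W2 W1.

Definition density_surjective {X Y : MetricSpace} (f : X -> Y) : Prop :=
  exists Z : X -> Prop,
    dens_eq Z (fun _ : Y => True) /\ (forall y : Y, exists x, Z x /\ f x = y).

(* If Y is finite, every dense subset of Y is Y itself and the image of a section of f
   works.  Otherwise let D0 be the union of maximal 2^-n-separated subsets of Y; it is dense
   and injects into nat * D for every dense D.  Openness of f yields a tree of points of X,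
   indexed by finite sequences of labels (d, m) in D0 * nat: a node x at depth k with label
   (d, m) satisfies f x = d and f(B(x, 2^-k)) contains B(d, 2^-m) and, if k > 0, lies
   within 2^-(k-1) of its parent.  For each y in Y some branch is Cauchy and, X being complete,
   converges to a preimage of y; so f maps the closure Z of the set of nodes onto Y.  The
   nodes are dense in Z and, by Hessenberg's theorem (an infinite set U injects U * U into
   itself, proved with Zorn's lemma), inject into every dense D.  Conversely f maps dense
   subsets of Z to dense subsets of Y. *)

From Stdlib Require Import Reals Lra Lia List FinFun.
From Stdlib Require Import Classical ClassicalEpsilon ProofIrrelevance.
From Stdlib Require Import FunctionalExtensionality PropExtensionality.
From Stdlib Require Cantor.
From mathcomp Require classical_sets.
Set Bullet Behavior "Strict Subproofs".
Close Scope R_scope.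

Lemma zorn_subsets {T : Type} (P : (T -> Prop) -> Prop) :
  (forall F : (T -> Prop) -> Prop, (forall S, F S -> P S) ->
     (forall S1 S2, F S1 -> F S2 -> (forall x, S1 x -> S2 x) \/ (forall x, S2 x -> S1 x)) ->
     P (fun x => exists2 S, F S & S x)) ->
  exists A, P A /\ forall B, P B -> (forall x, A x -> B x) -> forall x, B x -> A x.
Proof.
  intros chain_union.
  destruct (classical_sets.Zorn_bigcup chain_union) as [A [PA Amax]].
  exists A; split; [exact PA|].
  intros B PB AB. apply NNPP; intros BA.
  exact (Amax B (conj AB BA) PB).
Qed.

Lemma zorn_subsets_above {T : Type} (P : (T -> Prop) -> Prop) (A0 : T -> Prop) (x0 : T) :
  A0 x0 -> P A0 ->
  (forall F : (T -> Prop) -> Prop, (exists S, F S) -> (forall S, F S -> P S) ->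
     (forall S1 S2, F S1 -> F S2 -> (forall x, S1 x -> S2 x) \/ (forall x, S2 x -> S1 x)) ->
     P (fun x => exists2 S, F S & S x)) ->
  exists A, (forall x, A0 x -> A x) /\ P A /\
    forall B, P B -> (forall x, A x -> B x) -> forall x, B x -> A x.
Proof.
  intros A0x0 PA0 chain_union.
  set (P' := fun S : T -> Prop => (forall x, ~ S x) \/ (P S /\ forall x, A0 x -> S x)).
  destruct (zorn_subsets P') as [A [P'A Amax]].
  - intros F FP' Fchain.
    destruct (classic (exists2 S, F S & exists x, S x)) as [[S0 FS0 [y S0y]]|Fempty].
    2: { left. intros x [S FS Sx]. apply Fempty. eauto. }
    right.
    (* the empty members of the chain do not change its union *)
    set (F' := fun S => F S /\ exists x, S x).
    assert (F'P : forall S, F' S -> P S /\ forall x, A0 x -> S x).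
    { intros S [FS [x Sx]]. destruct (FP' S FS) as [Sempty|HS]; [|exact HS].
      exfalso. exact (Sempty x Sx). }
    assert (F'S0 : F' S0) by (split; eauto).
    replace (fun x => exists2 S, F S & S x) with (fun x => exists2 S, F' S & S x).
    + split.
      * apply chain_union; [exists S0; exact F'S0| |].
        -- intros S HS. apply F'P, HS.
        -- intros S1 S2 [F1 _] [F2 _]. apply Fchain; assumption.
      * intros x A0x. exists S0; [exact FS0|]. apply (F'P S0); [exact F'S0|exact A0x].
    + apply functional_extensionality; intros x.
      apply propositional_extensionality; split.
      * intros [S [FS _] Sx]. eauto.
      * intros [S FS Sx]. exists S; [|exact Sx]. split; eauto.
  - destruct P'A as [Aempty|[PA A0A]].
    + exfalso. apply (Aempty x0). apply (Amax A0); [right; split; auto|intros x Ax|exact A0x0].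
      exfalso. exact (Aempty x Ax).
    + exists A. split; [exact A0A|split; [exact PA|]].
      intros B PB AB. apply Amax; [right; split|]; auto.
Qed.

Lemma sig_eq {T : Type} {P : T -> Prop} (s t : sig P) : proj1_sig s = proj1_sig t -> s = t.
Proof. apply eq_sig_hprop. intros; apply proof_irrelevance. Qed.

Record partial_injection {T U : Type} (A : T -> Prop) (B : U -> Prop) (G : T * U -> Prop) :
  Prop := {
  pinj_dom : forall a b, G (a, b) -> A a /\ B b;
  pinj_functional : forall a b b', G (a, b) -> G (a, b') -> b = b';
  pinj_injective : forall a a' b, G (a, b) -> G (a', b) -> a = a'
}.
Arguments pinj_dom {T U A B G}.
Arguments pinj_functional {T U A B G}.
Arguments pinj_injective {T U A B G}.

Lemma partial_injection_flip {T U : Type} (A : T -> Prop) (B : U -> Prop) G :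
  partial_injection A B G -> partial_injection B A (fun p => G (snd p, fst p)).
Proof.
  intros [GAB Gfun Ginj]. split; simpl.
  - intros b a Gab. apply and_comm, GAB, Gab.
  - intros b a a'. apply Ginj.
  - intros b b' a. apply Gfun.
Qed.

Lemma card_le_of_partial_injection {T U : Type} (A : T -> Prop) (B : U -> Prop) G :
  partial_injection A B G -> (forall a, A a -> exists b, G (a, b)) -> card_le A B.
Proof.
  intros [GAB _ Ginj] Gtotal.
  destruct (choice (fun (s : sig A) (t : sig B) => G (proj1_sig s, proj1_sig t))) as [g Hg].
  - intros [a Aa]. destruct (Gtotal a Aa) as [b Gab].
    exists (exist B b (proj2 (GAB a b Gab))). exact Gab.
  - exists g. intros s t gst. apply sig_eq.
    apply (Ginj _ _ (proj1_sig (g s))); [apply Hg|rewrite gst; apply Hg].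
Qed.

Lemma card_le_total {T U : Type} (A : T -> Prop) (B : U -> Prop) : card_le A B \/ card_le B A.
Proof.
  destruct (zorn_subsets (partial_injection A B)) as [M [MAB Mmax]].
  - intros F Finj Fchain. split.
    + intros a b [S FS Sab]. apply (pinj_dom (Finj S FS)), Sab.
    + intros a b b' [S FS Sab] [S' FS' Sab'].
      destruct (Fchain S S' FS FS') as [SS'|S'S].
      * apply (pinj_functional (Finj S' FS') a); auto.
      * apply (pinj_functional (Finj S FS) a); auto.
    + intros a a' b [S FS Sab] [S' FS' Sa'b].
      destruct (Fchain S S' FS FS') as [SS'|S'S].
      * apply (pinj_injective (Finj S' FS') a a' b); auto.
      * apply (pinj_injective (Finj S FS) a a' b); auto.
  - destruct (classic (forall a, A a -> exists b, M (a, b))) as [Acovered|[a Ha]%not_all_ex_not].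
    { left. apply (card_le_of_partial_injection _ _ M MAB Acovered). }
    destruct (classic (forall b, B b -> exists a, M (a, b))) as [Bcovered|[b Hb]%not_all_ex_not].
    { right. apply (card_le_of_partial_injection _ _ _ (partial_injection_flip _ _ _ MAB)).
      exact Bcovered. }
    apply imply_to_and in Ha as [Aa Ha]. apply imply_to_and in Hb as [Bb Hb].
    exfalso. apply Ha. exists b.
    (* otherwise the pair (a, b) could be added to the maximal graph M *)
    apply (Mmax (fun p => M p \/ p = (a, b))); [|now left|now right].
    destruct MAB as [MAB' Mfun Minj].
    split.
    + intros x y [Mxy|Exy]; [auto|]. injection Exy as -> ->. auto.
    + intros x y y' [Mxy|Exy] [Mxy'|Exy'].
      * eauto.
      * injection Exy' as -> ->. exfalso; apply Ha; eauto.
      * injection Exy as -> ->. exfalso; apply Ha; eauto.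
      * injection Exy as -> ->. injection Exy' as ->. reflexivity.
    + intros x x' y [Mxy|Exy] [Mx'y|Ex'y].
      * eauto.
      * injection Ex'y as -> ->. exfalso; apply Hb; eauto.
      * injection Exy as -> ->. exfalso; apply Hb; eauto.
      * injection Exy as -> ->. injection Ex'y as ->. reflexivity.
Qed.

Definition inj_on {T V : Type} (A : T -> Prop) (k : T -> V) : Prop :=
  forall a a', A a -> A a' -> k a = k a' -> a = a'.

Lemma card_le_fun {T U : Type} (u0 : U) (A : T -> Prop) (B : U -> Prop) :
  card_le A B -> exists k : T -> U, (forall a, A a -> B (k a)) /\ inj_on A k.
Proof.
  intros [g g_inj].
  exists (fun a => match excluded_middle_informative (A a) with
                   | left Aa => proj1_sig (g (exist A a Aa))
                   | right _ => u0 end).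
  split.
  - intros a Aa. destruct (excluded_middle_informative (A a)); [|contradiction].
    apply proj2_sig.
  - intros a a' Aa Aa'.
    destruct (excluded_middle_informative (A a)) as [Aa1|]; [|contradiction].
    destruct (excluded_middle_informative (A a')) as [Aa1'|]; [|contradiction].
    intros E. apply sig_eq in E. apply g_inj in E. exact (f_equal (@proj1_sig _ _) E).
Qed.

Section Hessenberg.
Variables (U : Type) (e : nat -> U).
Hypothesis e_inj : Injective e.

(* A set S of [code_elem]s encodes a subset [code_dom S] of U together with the
   graph of a coding of pairs of its elements by its elements. *)
Definition code_elem : Type := (U + U * U * U)%type.
Definition code_dom (S : code_elem -> Prop) (u : U) : Prop := S (inl u).
Definition code_graph (S : code_elem -> Prop) (a b v : U) : Prop := S (inr (a, b, v)).

Record square_code (S : code_elem -> Prop) : Prop := {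
  code_range : forall a b v, code_graph S a b v -> code_dom S v;
  code_injective : forall a b a' b' v,
    code_graph S a b v -> code_graph S a' b' v -> a = a' /\ b = b';
  code_total : forall a b, code_dom S a -> code_dom S b -> exists v, code_graph S a b v
}.
Arguments code_range {S}.
Arguments code_injective {S}.
Arguments code_total {S}.

Definition base_code (z : code_elem) : Prop :=
  match z with
  | inl u => exists i, u = e i
  | inr (a, b, v) => exists i j, a = e i /\ b = e j /\ v = e (Cantor.to_nat (i, j))
  end.

Lemma square_code_base : square_code base_code.
Proof.
  split; unfold code_graph, code_dom.
  - intros a b v (i & j & _ & _ & ->). exists (Cantor.to_nat (i, j)). reflexivity.
  - intros a b a' b' v (i & j & -> & -> & ->) (i' & j' & -> & -> & E).
    apply e_inj, Cantor.to_nat_inj in E. injection E as -> ->. auto.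
  - intros a b [i ->] [j ->]. exists (e (Cantor.to_nat (i, j))), i, j. auto.
Qed.

Lemma square_code_chain (F : (code_elem -> Prop) -> Prop) :
  (forall S, F S -> square_code S) ->
  (forall S1 S2, F S1 -> F S2 -> (forall z, S1 z -> S2 z) \/ (forall z, S2 z -> S1 z)) ->
  square_code (fun z => exists2 S, F S & S z).
Proof.
  intros Fcode Fchain. unfold code_graph, code_dom. split.
  - intros a b v [S FS Sz]. exists S; [exact FS|]. apply (code_range (Fcode S FS) a b), Sz.
  - intros a b a' b' v [S FS Sz] [S' FS' Sz'].
    destruct (Fchain S S' FS FS') as [SS'|S'S].
    + apply (code_injective (Fcode S' FS') _ _ _ _ v); [apply SS'|]; assumption.
    + apply (code_injective (Fcode S FS) _ _ _ _ v); [|apply S'S]; assumption.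
  - intros a b [S FS Sa] [S' FS' Sb].
    destruct (Fchain S S' FS FS') as [SS'|S'S].
    + destruct (code_total (Fcode S' FS') a b) as [v Sv]; [apply SS'; exact Sa|exact Sb|].
      exists v, S'; assumption.
    + destruct (code_total (Fcode S FS) a b) as [v Sv]; [exact Sa|apply S'S; exact Sb|].
      exists v, S; assumption.
Qed.

Section Coding.
Variable S : code_elem -> Prop.
Hypothesis S_code : square_code S.
Hypothesis S_base : forall i, code_dom S (e i).
Let B := code_dom S.

Lemma square_code_fun :
  exists g : U -> U -> U, (forall a b, B a -> B b -> B (g a b)) /\
    forall a b a' b', B a -> B b -> B a' -> B b' -> g a b = g a' b' -> a = a' /\ b = b'.
Proof.
  destruct (choice (fun (p : U * U) v => B (fst p) -> B (snd p) -> code_graph S (fst p) (snd p) v))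
    as [g Hg].
  - intros [a b]. destruct (classic (B a /\ B b)) as [[Ba Bb]|NB].
    + destruct (code_total S_code a b Ba Bb) as [v Hv]. exists v; auto.
    + exists a. intros Ba Bb. exfalso; auto.
  - exists (fun a b => g (a, b)). split.
    + intros a b Ba Bb. apply (code_range S_code a b), (Hg (a, b)); assumption.
    + intros a b a' b' Ba Bb Ba' Bb' E.
      apply (code_injective S_code _ _ _ _ (g (a, b))); [|rewrite E]; apply (Hg (_, _)); assumption.
Qed.

(* Points of B are tagged with [e 0], points of D are sent into B and tagged with [e 1]. *)
Lemma absorb_inj (D : U -> Prop) (j : U -> U) :
  (forall u, D u -> B (j u)) -> inj_on D j ->
  exists t : U -> U, (forall u, B u \/ D u -> B (t u)) /\ inj_on (fun u => B u \/ D u) t.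
Proof.
  intros jB j_inj. destruct square_code_fun as [g [gB g_inj]].
  assert (e0 : B (e 0)) by apply S_base. assert (e1 : B (e 1)) by apply S_base.
  exists (fun u => match excluded_middle_informative (B u) with
                   | left _ => g u (e 0) | right _ => g (j u) (e 1) end).
  split.
  - intros u Hu. destruct (excluded_middle_informative (B u)) as [Bu|nBu].
    + apply gB; assumption.
    + apply gB; [apply jB; tauto|assumption].
  - intros u u' Hu Hu'.
    destruct (excluded_middle_informative (B u)) as [Bu|nBu];
    destruct (excluded_middle_informative (B u')) as [Bu'|nBu']; intros E.
    + apply g_inj in E as [E _]; assumption.
    + apply g_inj in E as [_ E%e_inj]; [discriminate|assumption..|apply jB; tauto|assumption].
    + apply g_inj in E as [_ E%e_inj]; [discriminate|apply jB; tauto|assumption..].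
    + apply g_inj in E as [E _]; [|apply jB; tauto|assumption|apply jB; tauto|assumption].
      apply j_inj in E; tauto.
Qed.

(* If B injects into its complement via psi, the pairs of elements of B \/ psi(B)
   not both in B can be coded in psi(B); this properly extends S. *)
Lemma square_code_extend (psi : U -> U) :
  (forall u, B u -> ~ B (psi u)) -> inj_on B psi ->
  exists S', square_code S' /\ (forall z, S z -> S' z) /\ S' (inl (psi (e 0))).
Proof.
  intros psi_out psi_inj.
  set (C := fun u => exists2 b, B b & psi b = u).
  destruct (choice (fun u b => C u -> B b /\ psi b = u)) as [j Hj].
  { intros u. destruct (classic (C u)) as [[b Bb <-]|nCu]; [exists b|exists u]; tauto. }
  destruct (absorb_inj C j) as [t [tB t_inj]].
  - intros u Cu. apply Hj, Cu.
  - intros u u' Cu Cu' E. destruct (Hj u Cu) as [_ <-]. destruct (Hj u' Cu') as [_ <-].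
    rewrite E. reflexivity.
  - destruct square_code_fun as [g [gB g_inj]].
    set (BC := fun u => B u \/ C u).
    exists (fun z => S z \/ match z with
                            | inl u => C u
                            | inr (a, b, v) =>
                                BC a /\ BC b /\ (C a \/ C b) /\ v = psi (g (t a) (t b))
                            end).
    split; [split|split]; unfold code_graph, code_dom.
    + intros a b v [Sv|(Ha & Hb & _ & ->)].
      * left. apply (code_range S_code a b), Sv.
      * right. exists (g (t a) (t b)); [apply gB; apply tB; assumption|reflexivity].
    + assert (old_new : forall a b a' b', S (inr (a, b, psi (g (t a') (t b')))) ->
                          BC a' -> BC b' -> False).
      { intros a b a' b' Sv Ha' Hb'. apply (psi_out (g (t a') (t b'))).
        - apply gB; apply tB; assumption.
        - apply (code_range S_code a b), Sv. }
      intros a b a' b' v [Sv|(Ha & Hb & _ & ->)] [Sv'|(Ha' & Hb' & _ & Ev')].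
      * apply (code_injective S_code _ _ _ _ v); assumption.
      * exfalso. subst v. eapply old_new; eassumption.
      * exfalso. eapply old_new; eassumption.
      * apply psi_inj in Ev'; try (apply gB; apply tB; assumption).
        apply g_inj in Ev' as [Ea Eb]; try (apply tB; assumption).
        split; apply t_inj; auto.
    + intros a b Ha Hb. destruct (classic (B a /\ B b)) as [[Ba Bb]|nBab].
      * destruct (code_total S_code a b Ba Bb) as [v Sv]. exists v. left. exact Sv.
      * exists (psi (g (t a) (t b))). right. unfold BC. tauto.
    + intros z Sz. left. exact Sz.
    + right. exists (e 0); [apply S_base|reflexivity].
Qed.

End Coding.

Lemma square_code_maximal :
  exists M, square_code M /\ (forall i, code_dom M (e i)) /\
    forall S, square_code S -> (forall z, M z -> S z) -> forall z, S z -> M z.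
Proof.
  destruct (zorn_subsets_above square_code base_code (inl (e 0))) as [M [baseM [M_code Mmax]]].
  - exists 0. reflexivity.
  - exact square_code_base.
  - intros F _. apply square_code_chain.
  - exists M. split; [exact M_code|split; [|exact Mmax]].
    intros i. apply baseM. exists i. reflexivity.
Qed.

Theorem prod_inj_of_infinite : exists h : U * U -> U, Injective h.
Proof.
  destruct square_code_maximal as [M [M_code [M_base Mmax]]].
  set (B := code_dom M).
  destruct (card_le_total (fun u => ~ B u) B) as [out_in|in_out].
  - destruct (card_le_fun (e 0) _ _ out_in) as [phi [phiB phi_inj]].
    destruct (absorb_inj M M_code M_base (fun u => ~ B u) phi phiB phi_inj) as [t [tB t_inj]].
    destruct (square_code_fun M M_code) as [g [gB g_inj]].
    assert (tB' : forall u, B (t u)) by (intros u; apply tB, classic).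
    exists (fun p => g (t (fst p)) (t (snd p))).
    intros [a b] [a' b'] E. apply g_inj in E as [Ea Eb]; try apply tB'.
    apply t_inj in Ea; [|apply classic..]. apply t_inj in Eb; [|apply classic..].
    simpl in Ea, Eb. subst. reflexivity.
  - exfalso. destruct (card_le_fun (e 0) _ _ in_out) as [psi [psi_out psi_inj]].
    destruct (square_code_extend M M_code M_base psi psi_out psi_inj) as [S' [S'_code [MS' S'psi]]].
    apply (psi_out (e 0)); [apply M_base|]. exact (Mmax S' S'_code MS' _ S'psi).
Qed.

End Hessenberg.

Lemma map_injective {A B : Type} (g : A -> B) : Injective g -> Injective (map g).
Proof.
  intros g_inj l. induction l as [|a l IH]; intros [|a' l'] E; try discriminate; [reflexivity|].
  injection E as Ea El. f_equal; [apply g_inj, Ea|apply IH, El].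
Qed.

Lemma list_inj_of_infinite (U : Type) (e : nat -> U) :
  Injective e -> exists c : list U -> U, Injective c.
Proof.
  intros e_inj. destruct (prod_inj_of_infinite U e e_inj) as [h h_inj].
  (* [enc] alone is not injective ([e 0] may be a code), but together with the length it is *)
  set (enc := fix enc l := match l with nil => e 0 | a :: l' => h (a, enc l') end).
  exists (fun l => h (e (length l), enc l)).
  intros l. induction l as [|a l IH]; intros [|a' l'] E; [reflexivity|..];
    apply h_inj in E; injection E as El%e_inj Ec; try discriminate.
  apply h_inj in Ec. injection Ec as -> Ec. f_equal. apply IH.
  injection El as ->. rewrite Ec. reflexivity.
Qed.

Lemma list_inj_of_inj_prod (U V : Type) (e : nat -> U) :
  Injective e -> (exists q : V -> nat * U, Injective q) ->
  exists c : list (V * nat) -> U, Injective c.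
Proof.
  intros e_inj [q q_inj].
  destruct (prod_inj_of_infinite U e e_inj) as [h h_inj].
  destruct (list_inj_of_infinite U e e_inj) as [c c_inj].
  set (code := fun p : V * nat => h (h (e (fst (q (fst p))), snd (q (fst p))), e (snd p))).
  assert (code_inj : Injective code).
  { intros [v n] [v' n'] E. unfold code in E; simpl in E.
    apply h_inj in E. injection E as E En%e_inj. apply h_inj in E. injection E as Ei%e_inj Eu.
    subst n'. rewrite (q_inj v v'); [reflexivity|].
    rewrite (surjective_pairing (q v)), Ei, Eu. symmetry; apply surjective_pairing. }
  exists (fun l => c (map code l)). intros l l' E. apply (map_injective _ code_inj), c_inj, E.
Qed.

Open Scope R_scope.

Arguments dist_nonneg {m}.
Arguments dist_eq0 {m}.
Arguments dist_sym {m}.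
Arguments dist_tri {m}.

Definition half_pow (k : nat) : R := (/ 2) ^ k.

Lemma half_pow_pos (k : nat) : 0 < half_pow k.
Proof. apply pow_lt. lra. Qed.

Lemma half_pow_S (k : nat) : half_pow (S k) = half_pow k / 2.
Proof. unfold half_pow. simpl. lra. Qed.

Lemma half_pow_le (n m : nat) : (n <= m)%nat -> half_pow m <= half_pow n.
Proof.
  induction 1 as [|m _ IH]; [lra|]. rewrite half_pow_S. pose proof (half_pow_pos m). lra.
Qed.

Lemma half_pow_lt (eps : R) : 0 < eps -> exists N, half_pow N < eps.
Proof.
  intros eps_pos.
  destruct (pow_lt_1_zero (/ 2) ltac:(rewrite Rabs_pos_eq; lra) eps eps_pos) as [N HN].
  exists N. specialize (HN N (le_n N)). rewrite Rabs_pos_eq in HN; [exact HN|].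
  apply Rlt_le, half_pow_pos.
Qed.

Section MetricFacts.
Variable M : MetricSpace.

Lemma dist_self (x : M) : dist x x = 0.
Proof. apply dist_eq0. reflexivity. Qed.

Lemma dist_pos (x y : M) : x <> y -> 0 < dist x y.
Proof.
  intros xy. destruct (dist_nonneg x y) as [|E]; [assumption|].
  exfalso. apply xy, dist_eq0. symmetry. exact E.
Qed.

Lemma ball_open (x : M) (r : R) : open_set (fun u => dist x u < r).
Proof.
  intros u xu. exists (r - dist x u). split; [lra|].
  intros v uv. pose proof (dist_tri x u v). lra.
Qed.

Lemma cauchy_of_half_pow_steps (w : nat -> M) :
  (forall n, dist (w n) (w (S n)) < half_pow n) -> cauchy_seq w.
Proof.
  intros step.
  assert (tail : forall n p, dist (w n) (w (n + p)%nat) <= 2 * half_pow n - 2 * half_pow (n + p)).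
  { intros n p. induction p as [|p IH].
    - rewrite Nat.add_0_r, dist_self. lra.
    - rewrite Nat.add_succ_r, half_pow_S.
      pose proof (dist_tri (w n) (w (n + p)%nat) (w (S (n + p)))). pose proof (step (n + p)%nat).
      lra. }
  assert (tail' : forall n m, (n <= m)%nat -> dist (w n) (w m) <= 2 * half_pow n).
  { intros n m nm. replace m with (n + (m - n))%nat by lia.
    pose proof (tail n (m - n)%nat). pose proof (half_pow_pos (n + (m - n))). lra. }
  intros eps eps_pos. destruct (half_pow_lt (eps / 4)) as [N HN]; [lra|].
  exists N. intros m n Nm Nn.
  pose proof (tail' N m Nm). pose proof (tail' N n Nn). pose proof (dist_tri (w m) (w N) (w n)).
  rewrite (dist_sym (w m) (w N)) in *. lra.
Qed.

Lemma converges_to_of_half_pow (u : nat -> M) (l : M) :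
  (forall n, dist (u n) l < half_pow n) -> converges_to u l.
Proof.
  intros close eps eps_pos. destruct (half_pow_lt eps eps_pos) as [N HN].
  exists N. intros n Nn. pose proof (close n). pose proof (half_pow_le N n Nn). lra.
Qed.

Lemma converges_to_unique (u : nat -> M) (l l' : M) :
  converges_to u l -> converges_to u l' -> l = l'.
Proof.
  intros ul ul'. apply NNPP. intros ll'. pose proof (dist_pos l l' ll') as d_pos.
  destruct (ul (dist l l' / 2)) as [N HN]; [lra|].
  destruct (ul' (dist l l' / 2)) as [N' HN']; [lra|].
  specialize (HN (max N N') ltac:(lia)). specialize (HN' (max N N') ltac:(lia)).
  pose proof (dist_tri l (u (max N N')) l'). rewrite dist_sym in HN. lra.
Qed.

(* A dense set missing a point y contains points ever closer to y, hence infinitely many. *)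
Lemma dense_finite_full (D : M -> Prop) :
  dense_in (fun _ => True) D -> ~ (exists g : nat -> sig D, Injective g) -> forall y, D y.
Proof.
  intros [_ D_dense] D_finite y. apply NNPP. intros nDy. apply D_finite.
  destruct (choice (fun s t : sig D => dist y (proj1_sig t) < dist y (proj1_sig s)))
    as [next Hnext].
  { intros [d Dd]. assert (yd : y <> d) by (intros <-; contradiction).
    destruct (D_dense y I (dist y d) (dist_pos y d yd)) as [d' [Dd' Hd']].
    exists (exist D d' Dd'). exact Hd'. }
  destruct (D_dense y I 1 Rlt_0_1) as [d0 [Dd0 _]].
  set (g := fun n => Nat.iter n next (exist D d0 Dd0)).
  set (r := fun n => dist y (proj1_sig (g n))).
  assert (r_dec : forall n p, r (S (n + p)) < r n).
  { intros n p. induction p as [|p IH].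
    - rewrite Nat.add_0_r. apply Hnext.
    - rewrite Nat.add_succ_r. pose proof (Hnext (g (S (n + p)))). unfold r in *. simpl in *. lra. }
  exists g. intros a b E.
  assert (rab : r a = r b) by (unfold r; rewrite E; reflexivity).
  destruct (Nat.lt_trichotomy a b) as [ab|[ab|ba]]; [|exact ab|]; exfalso.
  - pose proof (r_dec a (b - S a)%nat) as rba. replace (S (a + (b - S a))) with b in rba by lia.
    lra.
  - pose proof (r_dec b (a - S b)%nat) as rab'. replace (S (b + (a - S b))) with a in rab' by lia.
    lra.
Qed.

Lemma dense_infinite (D : M -> Prop) :
  dense_in (fun _ => True) D -> (exists g : nat -> M, Injective g) ->
  exists g : nat -> sig D, Injective g.
Proof.
  intros D_dense [g g_inj]. apply NNPP. intros D_finite.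
  pose proof (dense_finite_full D D_dense D_finite) as D_full.
  apply D_finite. exists (fun n => exist D (g n) (D_full (g n))).
  intros a b E. apply g_inj. exact (f_equal (@proj1_sig _ _) E).
Qed.

Lemma ex_separated_net (r : R) : 0 < r ->
  exists S : M -> Prop, (forall a b, S a -> S b -> a <> b -> r <= dist a b) /\
    (forall y, exists2 s, S s & dist y s < r).
Proof.
  intros r_pos.
  destruct (zorn_subsets (fun S : M -> Prop => forall a b, S a -> S b -> a <> b -> r <= dist a b))
    as [S [S_sep Smax]].
  - intros F Fsep Fchain a b [S1 F1 S1a] [S2 F2 S2b] ab.
    destruct (Fchain S1 S2 F1 F2) as [S12|S21].
    + apply (Fsep S2 F2); auto.
    + apply (Fsep S1 F1); auto.
  - exists S. split; [exact S_sep|]. intros y. apply NNPP. intros far.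
    assert (far' : forall s, S s -> r <= dist y s).
    { intros s Ss. apply Rnot_lt_le. intros ys. apply far. exists s; assumption. }
    assert (Sy : S y).
    { apply (Smax (fun z => S z \/ z = y)); [|now left|now right].
      intros a b [Sa| ->] [Sb| ->] ab; [auto|rewrite dist_sym; auto|auto|congruence]. }
    pose proof (far' y Sy) as ryy. rewrite dist_self in ryy. lra.
Qed.
End MetricFacts.

Lemma converges_to_continuous {X Y : MetricSpace} (f : X -> Y) (u : nat -> X) (l : X) :
  continuous_map f -> converges_to u l -> converges_to (fun n => f (u n)) (f l).
Proof.
  intros f_cont ul eps eps_pos. destruct (f_cont l eps eps_pos) as [del [del_pos Hdel]].
  destruct (ul del del_pos) as [N HN]. exists N. intros n Nn.
  rewrite dist_sym. apply Hdel. rewrite dist_sym. apply HN, Nn.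
Qed.

Lemma dens_le_image {X Y : MetricSpace} (f : X -> Y) (Z : X -> Prop) :
  continuous_map f -> (forall y, exists x, Z x /\ f x = y) -> dens_le (fun _ : Y => True) Z.
Proof.
  intros f_cont f_onto D [_ D_dense]. exists (image f D). split.
  - split; [auto|]. intros y _ eps eps_pos.
    destruct (f_onto y) as [z [Zz <-]].
    destruct (f_cont z eps eps_pos) as [del [del_pos Hdel]].
    destruct (D_dense z Zz del del_pos) as [x [Dx zx]].
    exists (f x). split; [exists x; auto|apply Hdel, zx].
  - destruct (choice (fun (s : sig (image f D)) (t : sig D) => f (proj1_sig t) = proj1_sig s))
      as [g Hg].
    { intros [y [x [Dx <-]]]. exists (exist D x Dx). reflexivity. }
    exists g. intros s t E. apply sig_eq. rewrite <- (Hg s), <- (Hg t), E. reflexivity.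
Qed.

(* D0 is the union of maximal 2^-n-separated sets: a point of the n-th one is
   determined by n and any point of D2 at distance less than 2^-n/2 from it. *)
Lemma ex_dense_inj_nat_dense (Y : MetricSpace) :
  exists D0 : Y -> Prop, dense_in (fun _ : Y => True) D0 /\
    forall D2, dense_in (fun _ : Y => True) D2 -> exists q : sig D0 -> nat * sig D2, Injective q.
Proof.
  destruct (choice (fun n (S : Y -> Prop) =>
      (forall a b, S a -> S b -> a <> b -> half_pow n <= dist a b) /\
      (forall y, exists2 s, S s & dist y s < half_pow n))) as [net Hnet].
  { intros n. apply ex_separated_net, half_pow_pos. }
  exists (fun y => exists n, net n y). split; [split; [auto|]|].
  - intros y _ eps eps_pos. destruct (half_pow_lt eps eps_pos) as [N HN].
    destruct (proj2 (Hnet N) y) as [s Ns ys]. exists s. split; [exists N; exact Ns|lra].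
  - intros D2 [_ D2_dense].
    destruct (choice (fun (s : sig (fun y => exists n, net n y)) (p : nat * sig D2) =>
        net (fst p) (proj1_sig s) /\ dist (proj1_sig s) (proj1_sig (snd p)) < half_pow (fst p) / 2))
      as [q Hq].
    { intros [y [n Ny]]. destruct (D2_dense y I (half_pow n / 2)) as [d [D2d yd]].
      - pose proof (half_pow_pos n). lra.
      - exists (n, exist D2 d D2d). split; assumption. }
    exists q. intros s t E. apply sig_eq. apply NNPP. intros st.
    destruct (Hq s) as [Ns sd]. destruct (Hq t) as [Nt td]. rewrite E in Ns, sd.
    pose proof (proj1 (Hnet _) _ _ Ns Nt st).
    pose proof (dist_tri (proj1_sig s) (proj1_sig (snd (q t))) (proj1_sig t)) as tri.
    rewrite (dist_sym (proj1_sig (snd (q t)))) in tri. lra.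
Qed.

Definition range {I T : Type} (F : I -> T) (x : T) : Prop := exists i, F i = x.

Definition closure_range {I : Type} {X : MetricSpace} (F : I -> X) (x : X) : Prop :=
  forall eps, 0 < eps -> exists i, dist x (F i) < eps.

Lemma dense_range_closure {I : Type} {X : MetricSpace} (F : I -> X) :
  dense_in (closure_range F) (range F).
Proof.
  split.
  - intros x [i <-] eps eps_pos. exists i. rewrite dist_self. exact eps_pos.
  - intros x Fx eps eps_pos. destruct (Fx eps eps_pos) as [i Hi]. exists (F i).
    split; [exists i; reflexivity|exact Hi].
Qed.

Lemma inj_range {I T : Type} (F : I -> T) : exists r : sig (range F) -> I, Injective r.
Proof.
  destruct (choice (fun (s : sig (range F)) i => F i = proj1_sig s)) as [r Hr].
  { intros [x [i <-]]. exists i. reflexivity. }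
  exists r. intros s t E. apply sig_eq. rewrite <- (Hr s), <- (Hr t), E. reflexivity.
Qed.

Section LiftTree.
Variables (X Y : MetricSpace) (f : X -> Y).
Hypothesis f_open : open_map f.
Hypothesis f_onto : surjective f.
Variable D0 : Y -> Prop.
Hypothesis D0_dense : dense_in (fun _ : Y => True) D0.
Variable x0 : X.

Definition covers (x : X) (r : R) (d : Y) (s : R) : Prop :=
  forall z, dist d z < s -> exists2 u, dist x u < r & f u = z.

Lemma covers_shift (x x' : X) (r r' : R) (d : Y) (s : R) :
  covers x r d s -> dist x' x + r <= r' -> covers x' r' d s.
Proof.
  intros cov xx' z dz. destruct (cov z dz) as [u xu <-]. exists u; [|reflexivity].
  pose proof (dist_tri x' x u). lra.
Qed.

Lemma ex_dense_cover (x : X) (eps eta : R) : 0 < eps -> 0 < eta ->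
  exists d m, D0 d /\ dist d (f x) < half_pow m /\ dist d (f x) < eta /\
    covers x eps d (half_pow m).
Proof.
  intros eps_pos eta_pos.
  destruct (f_open _ (ball_open X x eps) (f x)) as [del [del_pos Hdel]].
  { exists x. split; [rewrite dist_self; exact eps_pos|reflexivity]. }
  destruct (half_pow_lt (del / 2)) as [m Hm]; [lra|].
  pose proof (half_pow_pos m).
  destruct (proj2 D0_dense (f x) I (Rmin (half_pow m) eta)) as [d [D0d xd]].
  { apply Rmin_glb_lt; assumption. }
  pose proof (Rmin_l (half_pow m) eta). pose proof (Rmin_r (half_pow m) eta).
  rewrite dist_sym in xd.
  exists d, m. split; [exact D0d|split; [lra|split; [lra|]]].
  intros z dz. destruct (Hdel z) as [u [xu <-]]; [|exists u; auto].
  pose proof (dist_tri (f x) d z) as tri. rewrite (dist_sym (f x) d) in tri. lra.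
Qed.

Definition label : Type := (sig D0 * nat)%type.
Definition label_point (c : label) : Y := proj1_sig (fst c).
Definition label_index (c : label) : nat := snd c.

Definition lifts (w : X) (k : nat) (c : label) (x : X) : Prop :=
  ((0 < k)%nat -> dist w x < 2 * half_pow k) /\ f x = label_point c /\
  covers x (half_pow k) (label_point c) (half_pow (label_index c)).

Definition child (w : X) (k : nat) (c : label) : X := epsilon (inhabits x0) (lifts w k c).

(* [tree (c :: l)] is the child labelled c of [tree l] and has depth [length l]; [x0] only
   serves as the parent of the nodes of depth 0, which are unconstrained by it. *)
Fixpoint tree (l : list label) : X :=
  match l with
  | nil => x0
  | c :: l' => child (tree l') (length l') c
  end.

Lemma ex_lifting_label (w x : X) (k : nat) :
  ((0 < k)%nat -> dist w x < 2 * half_pow k) ->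
  exists c, lifts w k c (child w k c) /\
    dist (label_point c) (f x) < half_pow (label_index c) /\
    dist (label_point c) (f x) < half_pow k.
Proof.
  intros wx. pose proof (half_pow_pos k) as k_pos.
  assert (exists eps, 0 < eps /\ 2 * eps <= half_pow k /\
            ((0 < k)%nat -> dist w x + eps <= 2 * half_pow k)) as [eps (eps_pos & eps_k & eps_w)].
  { destruct k as [|k].
    - exists (half_pow 0 / 2). split; [lra|split; [lra|lia]].
    - specialize (wx ltac:(lia)).
      exists (Rmin (half_pow (S k) / 2) (2 * half_pow (S k) - dist w x)).
      pose proof (Rmin_l (half_pow (S k) / 2) (2 * half_pow (S k) - dist w x)).
      pose proof (Rmin_r (half_pow (S k) / 2) (2 * half_pow (S k) - dist w x)).
      split; [apply Rmin_glb_lt; lra|split; [lra|intros _; lra]]. }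
  destruct (ex_dense_cover x eps (half_pow k)) as [d [m (D0d & dm & dk & cov)]]; try assumption.
  destruct (cov d) as [x' xx' fx'].
  { rewrite dist_self. apply half_pow_pos. }
  exists (exist D0 d D0d, m). split; [|split; assumption].
  unfold child. apply epsilon_spec. exists x'. split; [|split].
  - intros k_gt0. specialize (eps_w k_gt0). pose proof (dist_tri w x x'). lra.
  - exact fx'.
  - apply (covers_shift x x' eps); [exact cov|]. rewrite dist_sym. lra.
Qed.

Definition tracks (y : Y) (l : list label) : Prop :=
  match l with
  | nil => False
  | c :: l' => lifts (tree l') (length l') c (tree l) /\
      dist (label_point c) y < half_pow (label_index c) /\
      dist (label_point c) y < half_pow (length l')
  end.

Lemma tracks_start (y : Y) : exists c, tracks y (c :: nil).
Proof.
  destruct (f_onto y) as [x <-].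
  destruct (ex_lifting_label x0 x 0) as [c (lift & dm & dk)]; [lia|].
  exists c. split; [exact lift|split; assumption].
Qed.

Lemma tracks_step (y : Y) (l : list label) : tracks y l -> exists c, tracks y (c :: l).
Proof.
  destruct l as [|c l']; [contradiction|]. intros ((_ & _ & cov) & dm & _).
  destruct (cov y dm) as [x wx <-].
  destruct (ex_lifting_label (tree (c :: l')) x (length (c :: l'))) as [c' (lift & dm' & dk')].
  { intros _. simpl length. rewrite half_pow_S. lra. }
  exists c'. split; [exact lift|split; assumption].
Qed.

Lemma ex_tracking_sequence (y : Y) :
  exists w : nat -> X, (forall n, dist (w n) (w (S n)) < half_pow n) /\
    (forall n, dist (f (w n)) y < half_pow n) /\ (forall n, exists l, w n = tree l).
Proof.
  destruct (tracks_start y) as [c0 start].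
  destruct (choice (fun l c => tracks y l -> tracks y (c :: l))) as [next Hnext].
  { intros l. destruct (classic (tracks y l)) as [Hl|Hl].
    - destruct (tracks_step y l Hl) as [c Hc]. exists c. auto.
    - exists c0. tauto. }
  set (b := fun n => Nat.iter n (fun l => next l :: l) (c0 :: nil)).
  assert (b_tracks : forall n, exists c l, b n = c :: l /\ length l = n /\ tracks y (c :: l)).
  { induction n as [|n (c & l & bn & len & Hb)].
    - exists c0, nil. auto.
    - exists (next (b n)), (b n). split; [reflexivity|]. rewrite bn.
      split; [simpl; lia|apply Hnext, Hb]. }
  exists (fun n => tree (b n)). split; [|split; [|eauto]].
  - intros n. destruct (b_tracks (S n)) as (c & l & bSn & len & (close & _) & _).
    change (b (S n)) with (next (b n) :: b n) in bSn. injection bSn as <- <-.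
    specialize (close ltac:(lia)). rewrite len, half_pow_S in close.
    change (tree (b (S n))) with (tree (next (b n) :: b n)). lra.
  - intros n. destruct (b_tracks n) as (c & l & bn & len & (_ & fx & _) & _ & dn).
    rewrite bn, fx, <- len. exact dn.
Qed.

Hypothesis X_complete : complete X.
Hypothesis f_cont : continuous_map f.

Lemma tree_closure_onto (y : Y) : exists x, closure_range tree x /\ f x = y.
Proof.
  destruct (ex_tracking_sequence y) as [w (w_step & w_close & w_tree)].
  destruct (X_complete w (cauchy_of_half_pow_steps X w w_step)) as [x wx].
  exists x. split.
  - intros eps eps_pos. destruct (wx eps eps_pos) as [N HN]. destruct (w_tree N) as [l wN].
    exists l. rewrite <- wN, dist_sym. apply HN. lia.
  - apply (converges_to_unique Y (fun n => f (w n))).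
    + apply converges_to_continuous; assumption.
    + apply converges_to_of_half_pow, w_close.
Qed.

End LiftTree.

Lemma density_surjective_finite {X Y : MetricSpace} (f : X -> Y) :
  continuous_map f -> surjective f -> ~ (exists g : nat -> Y, Injective g) ->
  density_surjective f.
Proof.
  intros f_cont f_onto Y_finite.
  destruct (choice (fun y x => f x = y) f_onto) as [s Hs].
  assert (s_onto : forall y, exists x, range s x /\ f x = y).
  { intros y. exists (s y). split; [exists y; reflexivity|apply Hs]. }
  exists (range s). split; [split|exact s_onto].
  - intros D2 D2_dense.
    assert (D2_full : forall y, D2 y).
    { apply (dense_finite_full Y D2 D2_dense). intros [g g_inj]. apply Y_finite.
      exists (fun n => proj1_sig (g n)). intros a b E. apply g_inj, sig_eq, E. }
    exists (range s). split.
    + split; [auto|]. intros x sx eps eps_pos. exists x. rewrite dist_self. auto.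
    + exists (fun z => exist D2 (f (proj1_sig z)) (D2_full _)).
      intros [x [y <-]] [x' [y' <-]] E. apply sig_eq. simpl.
      apply (f_equal (@proj1_sig Y D2)) in E. simpl in E. rewrite !Hs in E. subst. reflexivity.
  - apply (dens_le_image f); assumption.
Qed.

Lemma density_surjective_infinite {X Y : MetricSpace} (f : X -> Y) :
  complete X -> continuous_map f -> open_map f -> surjective f ->
  (exists g : nat -> Y, Injective g) -> density_surjective f.
Proof.
  intros X_complete f_cont f_open f_onto [g g_inj].
  destruct (f_onto (g 0%nat)) as [x0 _].
  destruct (ex_dense_inj_nat_dense Y) as [D0 [D0_dense D0_inj]].
  set (F := tree X Y f D0 x0).
  pose proof (tree_closure_onto X Y f f_open f_onto D0 D0_dense x0 X_complete f_cont) as F_onto.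
  exists (closure_range F). split; [split|exact F_onto].
  - intros D2 D2_dense. exists (range F). split; [apply dense_range_closure|].
    destruct (dense_infinite Y D2 D2_dense (ex_intro _ g g_inj)) as [e e_inj].
    destruct (list_inj_of_inj_prod (sig D2) (sig D0) e e_inj (D0_inj D2 D2_dense)) as [c c_inj].
    destruct (inj_range F) as [r r_inj].
    exists (fun x => c (r x)). intros a b E. apply r_inj, c_inj, E.
  - apply (dens_le_image f); assumption.
Qed.

Theorem theorem1p1 (X Y : MetricSpace) (f : X -> Y) :
  complete X -> continuous_map f -> open_map f -> surjective f ->
  density_surjective f.
Proof.
  intros X_complete f_cont f_open f_onto.
  destruct (classic (exists g : nat -> Y, Injective g)) as [Y_infinite|Y_finite].
  - apply density_surjective_infinite; assumption.
  - apply density_surjective_finite; assumption.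
Qed.
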